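(* Let $F\in\mathbb{Z}[x_0,\ldots,x_n]$ be a form. Then $\mathrm{o}(F)=n+1$ if and only if $\mathrm{o}(F_p)=n+1$ for all except finitely many primes $p$.
   Context: $F_p\in\mathbb{F}_p[x_0,\dots,x_n]$ denotes the reduction of $F$ modulo $p$. The order of a form over a field $K$ is the smallest integer $m$ such that the form is equivalent, via an invertible linear change of variables over $K$, to a form explicitly involving only $m$ variables; $\mathrm{o}(F)$ is the order over $\mathbb{Q}$ and $\mathrm{o}(F_p)$ the order over $\mathbb{F}_p$. *)

From HB Require Import structures.
From mathcomp Require Import all_boot all_order all_algebra.
From mathcomp Require Import mpoly.
Set Implicit Arguments. Unset Strict Implicit. Unset Printing Implicit Defensive.
Import GRing.Theory.
Local Open Scope ring_scope.

Definition lin_subst (K : fieldType) (N : nat) (A : 'M[K]_N) : N.-tuple {mpoly K[N]} :=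
  [tuple \sum_(j < N) A i j *: 'X_j | i < N].

Definition involves_only (K : fieldType) (N : nat) (G : {mpoly K[N]}) (m : nat) : Prop :=
  forall mono : 'X_{1..N}, mono \in msupp G ->
    forall i : 'I_N, (m <= i)%N -> mono i = 0%N.

Definition equiv_to_m_vars (K : fieldType) (N : nat) (F : {mpoly K[N]}) (m : nat) : Prop :=
  exists A : 'M[K]_N, A \in unitmx /\ involves_only (F \mPo lin_subst A) m.

Definition is_order (K : fieldType) (N : nat) (F : {mpoly K[N]}) (m : nat) : Prop :=
  equiv_to_m_vars F m /\ forall k, equiv_to_m_vars F k -> (m <= k)%N.

Definition to_rat (N : nat) (F : {mpoly int[N]}) : {mpoly rat[N]} :=
  map_mpoly (fun z : int => z%:~R) F.

Definition red_mod (p N : nat) (F : {mpoly int[N]}) : {mpoly 'F_p[N]} :=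
  map_mpoly (fun z : int => z%:~R) F.

(* A form G in x_0, ..., x_n is equivalent to a form in fewer variables iff some
   nonzero directional derivative sum_i v_i dG/dx_i vanishes: a change of variables
   removing x_n kills d/dx_n, and conversely, when the characteristic is 0 or exceeds
   deg G, a vanishing partial derivative means that the variable does not occur.
   For G the image of F over Q or F_p this is the linear system v W = 0, where W is
   the integer matrix of coefficients of the partial derivatives of F; so o(F) = n+1
   says that W has full row rank. Over Q this makes det (W W^T) a nonzero integer,
   which stays nonzero modulo all but finitely many primes; conversely a rational
   kernel vector scales to an integer one, which survives reduction modulo every
   large prime. *)

From HB Require Import structures.
From mathcomp Require Import all_boot all_order all_algebra.
From mathcomp Require Import mpoly.
From mathcomp Require Import fingroup perm.
Set Implicit Arguments. Unset Strict Implicit. Unset Printing Implicit Defensive.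
Import GRing.Theory Num.Theory.
Local Open Scope ring_scope.

Lemma mderivXU (R : nzRingType) n (l i : 'I_n) :
  ('X_l : {mpoly R[n]})^`M(i) = (l == i)%:R.
Proof.
rewrite mderivX mnm1E; case: eqP => [->|_]; last by rewrite scale0r.
suff -> : (U_(i) - U_(i) = 0)%MM by rewrite mpolyX0 scale1r.
by apply/mnmP => x; rewrite mnmBE mnm0E subnn.
Qed.

Section ChainRule.
Variables (R : comNzRingType) (n k : nat) (t : n.-tuple {mpoly R[k]}) (j : 'I_k).

Let chain_rule_at (P : {mpoly R[n]}) :=
  (P \mPo t)^`M(j) = \sum_(i < n) (P^`M(i) \mPo t) * (tnth t i)^`M(j).

Let chain_ruleD P Q : chain_rule_at P -> chain_rule_at Q -> chain_rule_at (P + Q).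
Proof.
rewrite /chain_rule_at => hP hQ; rewrite comp_mpolyD mderivD hP hQ -big_split /=.
by apply: eq_bigr => i _; rewrite mderivD comp_mpolyD mulrDl.
Qed.

Let chain_ruleZ c P : chain_rule_at P -> chain_rule_at (c *: P).
Proof.
rewrite /chain_rule_at => hP; rewrite comp_mpolyZ mderivZ hP scaler_sumr.
by apply: eq_bigr => i _; rewrite mderivZ comp_mpolyZ scalerAl.
Qed.

Let chain_ruleM P Q : chain_rule_at P -> chain_rule_at Q -> chain_rule_at (P * Q).
Proof.
rewrite /chain_rule_at => hP hQ; rewrite rmorphM /= mderivM hP hQ.
rewrite mulr_suml mulr_sumr -big_split /=.
apply: eq_bigr => i _; rewrite mderivM comp_mpolyD !rmorphM /= mulrDl.
by rewrite -!mulrA [_ * (Q \mPo t)]mulrC mulrA.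
Qed.

Let chain_rule1 : chain_rule_at 1.
Proof.
rewrite /chain_rule_at comp_mpoly1 -mpolyC1 mderivC big1 // => i _.
by rewrite mderivC comp_mpoly0 mul0r.
Qed.

Let chain_ruleXU l : chain_rule_at 'X_l.
Proof.
rewrite /chain_rule_at comp_mpolyXU (bigD1 l) //= big1 => [|i /negbTE ne].
  by rewrite mderivXU eqxx comp_mpoly1 mul1r addr0 -tnth_nth.
by rewrite mderivXU eq_sym ne comp_mpoly0 mul0r.
Qed.

Lemma mderiv_comp_mpoly (P : {mpoly R[n]}) :
  (P \mPo t)^`M(j) = \sum_(i < n) (P^`M(i) \mPo t) * (tnth t i)^`M(j).
Proof.
elim/mpolyind: P => [|c m P _ _ ihP].
  by rewrite comp_mpoly0 mderiv0 big1 // => i _; rewrite mderiv0 comp_mpoly0 mul0r.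
apply: chain_ruleD ihP; apply: chain_ruleZ; rewrite mpolyXE_id.
apply: (big_ind chain_rule_at) => [|p q|i _]; [exact: chain_rule1 | exact: chain_ruleM |].
elim: (m i) => [|e ihe]; first by rewrite expr0; exact: chain_rule1.
by rewrite exprS; apply: chain_ruleM.
Qed.

End ChainRule.

Lemma dhomog_comp_mpoly (R : comNzRingType) n k (t : n.-tuple {mpoly R[k]}) d
    (P : {mpoly R[n]}) :
  (forall i, tnth t i \is 1.-homog) -> P \is d.-homog -> P \mPo t \is d.-homog.
Proof.
move=> ht hP; rewrite comp_mpolyE big_seq.
apply: (big_ind (fun p : {mpoly R[k]} => p \is d.-homog)) => [|p q|m hm];
  [exact: dhomog0 | exact: dhomogD |].
apply: dhomogZ; rewrite -(dhomog_mf hP hm) /= mdegE.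
apply: (big_ind2 (fun (p : {mpoly R[k]}) e => p \is e.-homog)) => [|p e q e'|i _].
- exact: dhomog1.
- exact: dhomogM.
by move/(dhomogMn (m i)): (ht i); rewrite mul1n.
Qed.

Definition mderiv_dir (R : nzRingType) N (v : 'rV[R]_N) (P : {mpoly R[N]}) :
  {mpoly R[N]} := \sum_i v 0 i *: P^`M(i).

Section LinSubst.
Variables (K : fieldType) (N : nat).
Implicit Types (A B : 'M[K]_N) (P : {mpoly K[N]}).

Lemma tnth_lin_subst A i : tnth (lin_subst A) i = \sum_(j < N) A i j *: 'X_j.
Proof. by rewrite tnth_mktuple. Qed.

Lemma comp_tnth_lin_subst A B i :
  tnth (lin_subst A) i \mPo lin_subst B = tnth (lin_subst (A *m B)) i.
Proof.
rewrite !tnth_lin_subst raddf_sum /=.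
under eq_bigr => j _ do
  rewrite comp_mpolyZ comp_mpolyXU -tnth_nth tnth_lin_subst scaler_sumr.
rewrite exchange_big /=; apply: eq_bigr => l _.
by rewrite mxE scaler_suml; apply: eq_bigr => j _; rewrite scalerA.
Qed.

Lemma comp_lin_substM A B P :
  (P \mPo lin_subst A) \mPo lin_subst B = P \mPo lin_subst (A *m B).
Proof.
rewrite (comp_mpolyEX P (lin_subst A)) (comp_mpolyEX P (lin_subst (A *m B))).
rewrite raddf_sum /=; apply: eq_bigr => m _; rewrite comp_mpolyZ !comp_mpolyX.
by rewrite rmorph_prod; congr (_ *: _); apply: eq_bigr => i _;
  rewrite rmorphXn /= comp_tnth_lin_subst.
Qed.

Lemma comp_lin_subst1 P : P \mPo lin_subst 1%:M = P.
Proof.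
suff -> : lin_subst (1%:M : 'M[K]_N) = [tuple 'X_i | i < N] by exact: comp_mpoly_id.
apply: eq_from_tnth => i; rewrite tnth_lin_subst tnth_mktuple (bigD1 i) //= big1.
  by rewrite mxE eqxx scale1r addr0.
by move=> j /negbTE ne; rewrite mxE eq_sym ne scale0r.
Qed.

Lemma mderiv_tnth_lin_subst A i j : (tnth (lin_subst A) i)^`M(j) = (A i j)%:MP.
Proof.
rewrite tnth_lin_subst raddf_sum (bigD1 j) //= big1 => [|l /negbTE ne].
  by rewrite mderivZ mderivXU eqxx addr0 -mul_mpolyC mulr1.
by rewrite mderivZ mderivXU ne scaler0.
Qed.

Lemma mderiv_comp_lin_subst A P j :
  (P \mPo lin_subst A)^`M(j) = mderiv_dir (row j A^T) P \mPo lin_subst A.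
Proof.
rewrite mderiv_comp_mpoly raddf_sum /=; apply: eq_bigr => i _.
by rewrite mderiv_tnth_lin_subst comp_mpolyZ !mxE mulrC mul_mpolyC.
Qed.

Lemma dhomog_comp_lin_subst d A P : P \is d.-homog -> P \mPo lin_subst A \is d.-homog.
Proof.
apply: dhomog_comp_mpoly => i; rewrite tnth_lin_subst.
apply: (big_ind (fun p : {mpoly K[N]} => p \is 1.-homog)) => [|p q|j _];
  [exact: dhomog0 | exact: dhomogD |].
by apply: dhomogZ; rewrite dhomogX /= mdeg1.
Qed.

End LinSubst.

Definition char_gt (K : fieldType) (d : nat) : Prop :=
  forall k, (0 < k <= d)%N -> k%:R != 0 :> K.

Section FewerVariables.
Variable K : fieldType.

Lemma involves_only_mderiv N (G : {mpoly K[N]}) m (i : 'I_N) :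
  involves_only G m -> (m <= i)%N -> G^`M(i) = 0.
Proof.
move=> hG le_mi; apply/mpolyP => mo; rewrite mcoeff_mderiv mcoeff0.
rewrite memN_msupp_eq0 ?mul0rn //; apply/negP => /hG /(_ i le_mi).
by rewrite mnmDE mnm1E eqxx addn1.
Qed.

(* dG/dx_i has coefficient (m i) * G@_m at m - e_i, and 0 < m i <= d. *)
Lemma mderiv_eq0_msupp N d (G : {mpoly K[N]}) (i : 'I_N) :
  char_gt K d -> G \is d.-homog -> G^`M(i) = 0 ->
  {in msupp G, forall m : 'X_{1..N}, m i = 0%N}.
Proof.
move=> hK hG dG m mG; have [//|mi_gt0] := posnP (m i).
have Gm : G@_m != 0 by rewrite -mcoeff_msupp.
have mi : (m i)%:R != 0 :> K.
  by apply: hK; rewrite mi_gt0 -(dhomog_mf hG mG) /= mdegE (bigD1 i) //= leq_addr.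
have := congr1 (mcoeff (m - U_(i))%MM) dG.
rewrite mcoeff_mderiv mcoeff0 submK; last by rewrite lep1mP -lt0n.
rewrite mnmBE mnm1E eqxx subn1 prednK // -mulr_natr => /eqP.
by rewrite mulf_eq0 (negbTE Gm) (negbTE mi).
Qed.

Lemma unitmx_with_last_row n (v : 'rV[K]_n.+1) :
  v != 0 -> exists2 B : 'M[K]_n.+1, B \in unitmx & row ord_max B = v.
Proof.
case/matrix0Pn => a [k]; rewrite (ord1 a) => vk {a}.
pose s := tperm k ord_max.
pose C : 'M[K]_n.+1 := \matrix_(i, j) if i == ord_max then v 0 (s j) else (i == j)%:R.
exists (col_perm s C); last by apply/rowP => j; rewrite !mxE eqxx tpermK.
rewrite col_permE unitmx_mul unitmx_perm andbT unitmxE unitfE det_trig.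
  rewrite big_ord_recr /= big1 ?mul1r => [|i _]; first by rewrite !mxE eqxx tpermR.
  by rewrite !mxE eqxx -val_eqE /= ltn_eqF.
apply/is_trig_mxP => i j lt_ij; rewrite !mxE -!val_eqE /= (ltn_eqF lt_ij) ltn_eqF //.
by rewrite (leq_trans lt_ij) // -ltnS.
Qed.

End FewerVariables.

Section FullOrder.
Variables (K : fieldType) (n : nat).
Implicit Type G : {mpoly K[n.+1]}.

Lemma is_order_full G : is_order G n.+1 <-> ~ equiv_to_m_vars G n.
Proof.
split=> [[_ minG] /minG|noeq]; first by rewrite ltnn.
split=> [|k [A [uA onlyA]]].
  exists 1%:M; split; first exact: unitmx1.
  by rewrite comp_lin_subst1 => m _ i; rewrite leqNgt ltn_ord.
rewrite leqNgt; apply/negP; rewrite ltnS => le_kn; apply: noeq.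
by exists A; split=> // m mA i le_ni; apply: onlyA mA i (leq_trans le_kn le_ni).
Qed.

Lemma equiv_to_m_vars_mderiv_dir G :
  equiv_to_m_vars G n -> exists2 v : 'rV[K]_n.+1, v != 0 & mderiv_dir v G = 0.
Proof.
case=> A [uA onlyA]; exists (row ord_max A^T).
  rewrite rowE mulmx_free_eq0 ?row_free_unit ?unitmx_tr //.
  by apply/eqP => /matrixP /(_ 0 ord_max) /eqP; rewrite !mxE !eqxx oner_eq0.
have : mderiv_dir (row ord_max A^T) G \mPo lin_subst A = 0.
  by rewrite -mderiv_comp_lin_subst (involves_only_mderiv onlyA).
move/(congr1 (comp_mpoly (lin_subst (invmx A)))).
by rewrite comp_lin_substM mulmxV // comp_lin_subst1 comp_mpoly0.
Qed.

Lemma mderiv_dir_equiv_to_m_vars d G (v : 'rV[K]_n.+1) :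
  char_gt K d -> G \is d.-homog -> v != 0 -> mderiv_dir v G = 0 ->
  equiv_to_m_vars G n.
Proof.
move=> hK hG /unitmx_with_last_row[B uB Bv] Gv.
exists B^T; split; first by rewrite unitmx_tr.
have dG : (G \mPo lin_subst B^T)^`M(ord_max) = 0.
  by rewrite mderiv_comp_lin_subst trmxK Bv Gv comp_mpoly0.
move=> m /(mderiv_eq0_msupp hK (dhomog_comp_lin_subst _ hG) dG) mG i le_ni.
by have -> : i = ord_max by apply/val_inj/eqP; rewrite eqn_leq le_ni -ltnS ltn_ord.
Qed.

Lemma is_order_full_mderiv_dir d G : char_gt K d -> G \is d.-homog ->
  is_order G n.+1 <-> forall v : 'rV[K]_n.+1, mderiv_dir v G = 0 -> v = 0.
Proof.
move=> hK hG; apply: iff_trans (is_order_full G) _.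
split=> [noeq v Gv | ker0 /equiv_to_m_vars_mderiv_dir[v v0 Gv]].
  apply/eqP; apply: contraT => v0; case: noeq.
  exact: mderiv_dir_equiv_to_m_vars hK hG v0 Gv.
by rewrite (ker0 v Gv) eqxx in v0.
Qed.

End FullOrder.

Section CoefficientMatrix.
Variables (R : nzRingType) (K : fieldType) (f : {additive R -> K}).

Lemma mderiv_map_mpoly N (P : {mpoly R[N]}) i :
  (map_mpoly f P)^`M(i) = map_mpoly f P^`M(i).
Proof.
by apply/mpolyP => m; rewrite mcoeff_mderiv !mcoeff_map_mpoly mcoeff_mderiv raddfMn.
Qed.

Lemma dhomog_map_mpoly N d (P : {mpoly R[N]}) :
  P \is d.-homog -> map_mpoly f P \is d.-homog.
Proof.
move=> hP; apply/dhomogP => m; rewrite mcoeff_msupp mcoeff_map_mpoly => fPm.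
apply: (dhomog_mf hP); rewrite mcoeff_msupp.
by apply: contraNneq fPm => ->; rewrite raddf0.
Qed.

Variables (N : nat) (F : {mpoly R[N]}).

Definition deriv_msupp : seq 'X_{1..N} :=
  flatten [seq msupp F^`M(i) | i <- enum 'I_N].

Definition deriv_coef_mx : 'M[R]_(N, size deriv_msupp) :=
  \matrix_(i, j) F^`M(i)@_(nth 0%MM deriv_msupp j).

Lemma mcoeff_mderiv_dir_map (v : 'rV[K]_N) m :
  (mderiv_dir v (map_mpoly f F))@_m = \sum_i v 0 i * f F^`M(i)@_m.
Proof.
rewrite raddf_sum; apply: eq_bigr => i _.
by rewrite /= mcoeffZ mderiv_map_mpoly mcoeff_map_mpoly.
Qed.

Lemma mderiv_dir_map_eq0 (v : 'rV[K]_N) :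
  mderiv_dir v (map_mpoly f F) = 0 <-> v *m map_mx f deriv_coef_mx = 0.
Proof.
split=> [vF | vW].
  apply/rowP => j; rewrite !mxE -[RHS](mcoeff0 _ (nth 0%MM deriv_msupp j)) -vF.
  by rewrite mcoeff_mderiv_dir_map; apply: eq_bigr => i _; rewrite !mxE.
apply/mpolyP => m; rewrite mcoeff_mderiv_dir_map mcoeff0.
have [mW | mNW] := boolP (m \in deriv_msupp).
  have jW : (index m deriv_msupp < size deriv_msupp)%N by rewrite index_mem.
  move/rowP: vW => /(_ (Ordinal jW)); rewrite !mxE => vWm; apply: (etrans _ vWm).
  by apply: eq_bigr => i _; rewrite !mxE nth_index.
rewrite big1 // => i _; rewrite memN_msupp_eq0 ?raddf0 ?mulr0 //.
apply: contra mNW => mFi; apply/flattenP; exists (msupp F^`M(i)) => //.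
by apply: map_f; rewrite mem_enum.
Qed.

End CoefficientMatrix.

Lemma is_order_full_row_free (R : nzRingType) (K : fieldType) (f : {additive R -> K})
    n d (F : {mpoly R[n.+1]}) :
  char_gt K d -> F \is d.-homog ->
  is_order (map_mpoly f F) n.+1 <-> row_free (map_mx f (deriv_coef_mx F)).
Proof.
move=> hK hF; apply: iff_trans (is_order_full_mderiv_dir hK (dhomog_map_mpoly f hF)) _.
split=> [ker0 | freeW v /mderiv_dir_map_eq0 vW].
  by apply: inj_row_free => v /mderiv_dir_map_eq0; apply: ker0.
by apply/eqP; rewrite -(mulmx_free_eq0 _ freeW) vW.
Qed.

Lemma char_gt_num (R : numFieldType) d : char_gt R d.
Proof. by move=> k /andP[k_gt0 _]; rewrite pnatr_eq0 -lt0n. Qed.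

Lemma char_gt_Fp p d : prime p -> (d < p)%N -> char_gt 'F_p d.
Proof.
move=> p_pr lt_dp k /andP[k_gt0 le_kd]; rewrite -(dvdn_pcharf (pchar_Fp p_pr)).
by apply: contraL lt_dp => /(dvdn_leq k_gt0) le_pk; rewrite -leqNgt (leq_trans le_pk).
Qed.

Lemma intr_Fp_eq0 p (z : int) : prime p -> (z%:~R == 0 :> 'F_p) = (p %| `|z|)%N.
Proof.
move=> p_pr; rewrite (dvdn_pcharf (pchar_Fp p_pr)).
by case: z => k; rewrite ?NegzE ?mulrNz ?oppr_eq0 -pmulrn.
Qed.

Lemma gram_unitmx (R : realFieldType) m k (W : 'M[R]_(m, k)) :
  row_free W -> W *m W^T \in unitmx.
Proof.
move=> freeW; rewrite -row_free_unit; apply: inj_row_free => u.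
rewrite mulmxA => uWW; apply/eqP; rewrite -(mulmx_free_eq0 _ freeW).
set y := u *m W in uWW *.
have /matrixP/(_ 0 0) : y *m y^T = 0 by rewrite trmx_mul mulmxA uWW mul0mx.
rewrite !mxE => /eqP; rewrite psumr_eq0 => [/allP y0|i _]; last first.
  by rewrite [y^T _ _]mxE -expr2 sqr_ge0.
apply/eqP/rowP => i; have := y0 i (mem_index_enum i).
by rewrite [y^T _ _]mxE mulf_eq0 orbb => /eqP ->; rewrite mxE.
Qed.

Lemma prime_notin_above (S : seq nat) b :
  exists p, [/\ prime p, p \notin S & (b < p)%N].
Proof.
have [p lt_p p_pr] := prime_above (b + \sum_(x <- S) x).
exists p; split=> //; last by apply: leq_ltn_trans lt_p; apply: leq_addr.
apply: contraL lt_p => pS; rewrite -leqNgt (leq_trans _ (leq_addl _ _)) //.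
by rewrite (big_rem p) //= leq_addr.
Qed.

Section IntegerMatrix.
Variables (m k : nat) (W : 'M[int]_(m, k)).

Let W_Q : 'M[rat]_(m, k) := map_mx intr W.
Let W_F p : 'M['F_p]_(m, k) := map_mx intr W.

Lemma row_free_Fp_of_rat : row_free W_Q ->
  exists S : seq nat, forall p, prime p -> p \notin S -> row_free (W_F p).
Proof.
rewrite /W_Q /W_F => /gram_unitmx.
rewrite map_trmx -map_mxM unitmxE unitfE det_map_mx intr_eq0.
set G := W *m W^T => detG; exists (iota 0 `|\det G|.+1) => p p_pr.
rewrite mem_iota /= add0n ltnS -ltnNge => lt_det_p.
have uG : (map_mx intr G : 'M['F_p]_m) \in unitmx.
  rewrite unitmxE unitfE det_map_mx intr_Fp_eq0 //.
  by apply: contraL lt_det_p => /dvdn_leq; rewrite absz_gt0 detG -leqNgt => ->.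
apply/row_freeP; exists ((W_F p)^T *m invmx (map_mx intr G)).
by rewrite mulmxA map_trmx -map_mxM mulmxV.
Qed.

Lemma int_row_kernel : ~~ row_free W_Q -> exists2 w : 'rV[int]_m, w != 0 & w *m W = 0.
Proof.
rewrite -kermx_eq0 => /rowV0Pn[u]; rewrite sub_kermx => /eqP uW u0.
pose c := \prod_j denq (u 0 j).
pose w : 'rV[int]_m := \row_i (numq (u 0 i) * \prod_(j | j != i) denq (u 0 j)).
have c0 : c%:~R != 0 :> rat.
  by rewrite intr_eq0; apply/prodf_neq0 => j _; apply: denq_neq0.
have wu : map_mx intr w = c%:~R *: u.
  apply/rowP => i; rewrite !mxE rmorphM rmorph_prod /= numqE /c rmorph_prod.
  by rewrite [in RHS](bigD1 i) //= -mulrA [u 0 i * _]mulrC.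
exists w.
  apply: contraNneq u0 => w0; move/eqP: wu; rewrite w0 map_mx0 eq_sym scaler_eq0.
  by rewrite (negbTE c0).
have /matrixP wW : map_mx intr (w *m W) = 0 :> 'M[rat]_(1, k).
  by rewrite map_mxM wu -scalemxAl uW scaler0.
apply/matrixP => a j; apply/eqP.
by move: (wW a j); rewrite !mxE => /eqP; rewrite intr_eq0.
Qed.

Lemma not_row_free_Fp l (w : 'M[int]_(l, m)) a i p :
  prime p -> (0 < `|w a i| < p)%N -> w *m W = 0 -> ~~ row_free (W_F p).
Proof.
move=> p_pr /andP[wi_gt0 lt_wi_p] wW; apply/negP => freeF.
have /eqP : map_mx intr w *m W_F p = 0 by rewrite -map_mxM wW map_mx0.
rewrite mulmx_free_eq0 // => /eqP/matrixP/(_ a i)/eqP; rewrite !mxE intr_Fp_eq0 //.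
by move/(dvdn_leq wi_gt0); rewrite leqNgt lt_wi_p.
Qed.

Lemma row_free_rat_of_Fp (S : seq nat) :
  (forall p, prime p -> p \notin S -> row_free (W_F p)) -> row_free W_Q.
Proof.
move=> freeF; apply: contraT => /int_row_kernel[w /matrix0Pn[a [i]]].
rewrite -absz_gt0 => wi_gt0 wW.
have [p [p_pr pS lt_wi_p]] := prime_notin_above S `|w a i|.
have lt_wi : (0 < `|w a i| < p)%N by rewrite wi_gt0.
by move: (freeF p p_pr pS); rewrite (negbTE (not_row_free_Fp p_pr lt_wi wW)).
Qed.

Lemma row_free_rat_iff_Fp : row_free W_Q <->
  exists S : seq nat, forall p, prime p -> p \notin S -> row_free (W_F p).
Proof.
by split=> [/row_free_Fp_of_rat | [S /row_free_rat_of_Fp]].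
Qed.

End IntegerMatrix.

Theorem theorem3p12 (n d : nat) (F : {mpoly int[n.+1]}) (hF : F \is d.-homog) :
  is_order (to_rat F) n.+1 <->
  exists S : seq nat, forall p : nat, prime p -> p \notin S ->
    is_order (red_mod p F) n.+1.
Proof.
have order_Fp p : prime p -> (d < p)%N -> is_order (red_mod p F) n.+1 <->
    row_free (map_mx intr (deriv_coef_mx F) : 'M['F_p]_(_, _)).
  by move=> p_pr lt_dp; apply: is_order_full_row_free (char_gt_Fp p_pr lt_dp) hF.
apply: iff_trans (is_order_full_row_free _ (@char_gt_num rat d) hF) _.
apply: iff_trans (row_free_rat_iff_Fp _) _.
by split=> -[S freeS]; exists (S ++ iota 0 d.+1) => p p_pr;
  rewrite mem_cat mem_iota negb_or /= add0n ltnS -ltnNge => /andP[pS lt_dp];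
  apply/(order_Fp p p_pr lt_dp)/freeS.
Qed.
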